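(* Let $\kappa<\Gamma$ be infinite cardinals and let $f\mapsto\hat f$ be a surjective linear isometry from $X^{\kappa,\Gamma}$ onto $C(K^{\kappa,\Gamma})$ preserving pointwise multiplication and order, $K^{\kappa,\Gamma}$ compact. Then there is a point $p\in K^{\kappa,\Gamma}$ such that $\{\hat f: f\in X_0^{\kappa,\Gamma}\}=C(K^{\kappa,\Gamma},p)$; consequently $X_0^{\kappa,\Gamma}$ is isometric to $C(K^{\kappa,\Gamma},p)$. Moreover, $p$ is a $P$-point of $K^{\kappa,\Gamma}$.
   Context: $X^{\kappa,\Gamma}=\{f\in\ell_\infty(\Gamma):\exists A\subseteq\Gamma,\ |A|=\kappa,\ f|_{\Gamma\setminus A}\text{ is constant}\}$ and $X_0^{\kappa,\Gamma}=\{f\in\ell_\infty(\Gamma):\exists A\subseteq\Gamma,\ |A|=\kappa,\ f|_{\Gamma\setminus A}\equiv 0\}$, both with the sup norm. For compact $K$ and $p\in K$, $C(K,p)=\{f\in C(K):f(p)=0\}$. A point $p\in K$ is a $P$-point if every $g\in C(K)$ is constant on some open neighbourhood of $p$. *)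

From HB Require Import structures.
From mathcomp Require Import all_boot all_order all_algebra.
From mathcomp Require Import all_classical all_reals all_analysis.
Unset Printing Implicit Defensive.
Import Order.TTheory GRing.Theory Num.Theory.
Import numFieldNormedType.Exports.
Local Open Scope classical_set_scope.
Local Open Scope card_scope.
Local Open Scope ring_scope.

Definition supnorm (R : realType) (T : Type) (f : T -> R) : R :=
  sup [set `|f x| | x in [set: T]].

Definition linfty (R : realType) (G : Type) : set (G -> R) :=
  [set f | exists M : R, forall x, `|f x| <= M].

(* X^{kappa,Gamma}; the cardinal kappa is the cardinality of the type Kap *)
Definition Xkg (R : realType) (Kap G : Type) : set (G -> R) :=
  [set f | linfty R G f /\
     exists A : set G, A #= [set: Kap] /\
       exists c : R, forall x, ~ A x -> f x = c].

Definition X0kg (R : realType) (Kap G : Type) : set (G -> R) :=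
  [set f | linfty R G f /\
     exists A : set G, A #= [set: Kap] /\
       forall x, ~ A x -> f x = 0].

Definition CK (R : realType) (K : topologicalType) : set (K -> R) :=
  [set g | continuous g].
Definition CKp (R : realType) (K : topologicalType) (p : K) : set (K -> R) :=
  [set g | continuous g /\ g p = 0].

Definition P_point (R : realType) (K : topologicalType) (p : K) : Prop :=
  forall g : K -> R, continuous g ->
    exists U : set K, open U /\ U p /\ forall x, U x -> g x = g p.

(* For [|A| = kappa] the indicator of [Gamma \ A] is an idempotent of
   [X^{kappa,Gamma}], so [T] maps it to the indicator of a clopen set
   [Tsupp A], which is nonempty because [T] is an isometry and [A <> Gamma].
   Since [kappa + kappa = kappa], [Tsupp (A `|` B) = Tsupp A `&` Tsupp B], so by
   compactness all the [Tsupp A] share a point [p].  A function of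
   [X^{kappa,Gamma}] equal to [c] off [A] is mapped to a function equal to [c]
   on the neighbourhood [Tsupp A] of [p]: this gives both [T @` X_0 = C(K, p)]
   and that [p] is a P-point.  The identity [kappa + kappa = kappa] is obtained
   from a maximal injection [bool * S -> S] given by Zorn's lemma. *)

From HB Require Import structures.
From mathcomp Require Import all_boot all_order all_algebra.
From mathcomp Require Import all_classical all_reals all_analysis.
From mathcomp Require Import zify.
Import Order.TTheory GRing.Theory Num.Theory.
Import numFieldNormedType.Exports.
Local Open Scope classical_set_scope.
Local Open Scope card_scope.

Lemma card_le_inj T U (A : set T) (B : set U) (u0 : U) : A #<= B ->
  exists f : T -> U, (forall x, A x -> B (f x)) /\
    (forall x y, A x -> A y -> f x = f y -> x = y).
Proof.
move/card_leP => [g].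
exists (fun x => if pselect (A x) is left Ax then val (g (exist _ x (mem_set Ax)))
                 else u0); split.
  by move=> x Ax; case: pselect => // Ax'; exact: set_mem (valP _).
move=> x y Ax Ay; case: pselect => // Ax'; case: pselect => // Ay'.
move=> /val_inj/('inj_g) gxy.
by have := gxy (mem_set I) (mem_set I) => /(congr1 val).
Qed.
Arguments card_le_inj {T U A B} u0 _.

Lemma card_le_of_inj T U (A : set T) (B : set U) (f : T -> U) :
  (forall x, A x -> B (f x)) ->
  (forall x y, A x -> A y -> f x = f y -> x = y) -> A #<= B.
Proof.
move=> fAB finj; have : $|{injfun A >-> B}|.
  by apply/injfunPex; exists f => // x y /set_mem Ax /set_mem Ay; exact: finj.
by case=> g; exact: inj_card_le g.
Qed.

Section BoolProdInjection.
Variable T : Type.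
Implicit Types (W : set ((bool * T) * T)) (S : set T).

Definition pdom W : set T := [set k | exists z, W ((true, k), z)].

(* [W] is the graph of an injective map from [bool * pdom W] into [pdom W]. *)
Definition doubling W : Prop :=
  [/\ (forall x y y', W (x, y) -> W (x, y') -> y = y'),
      (forall x x' y, W (x, y) -> W (x', y) -> x = x'),
      (forall x y, W (x, y) -> pdom W x.2 /\ pdom W y) &
      (forall k b, pdom W k -> exists z, W ((b, k), z))].

Lemma doubling_bigcup (F : set (set ((bool * T) * T))) :
  F `<=` doubling -> total_on F subset -> doubling (\bigcup_(W in F) W).
Proof.
move=> Fd Ftot; split.
- move=> x y y' [W1 F1 h1] [W2 F2 h2].
  case: (Ftot _ _ F1 F2) => sub.
    by case: (Fd _ F2) => fun2 _ _ _; apply: fun2 (sub _ h1) h2.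
  by case: (Fd _ F1) => fun1 _ _ _; apply: fun1 h1 (sub _ h2).
- move=> x x' y [W1 F1 h1] [W2 F2 h2].
  case: (Ftot _ _ F1 F2) => sub.
    by case: (Fd _ F2) => _ inj2 _ _; apply: inj2 (sub _ h1) h2.
  by case: (Fd _ F1) => _ inj1 _ _; apply: inj1 h1 (sub _ h2).
- move=> x y [W1 F1 h1]; case: (Fd _ F1) => _ _ dom1 _.
  have [[z hz] [z' hz']] := dom1 _ _ h1.
  by split; [exists z | exists z']; exists W1.
- move=> k b [z [W1 F1 h1]]; case: (Fd _ F1) => _ _ _ tot1.
  by have [z' hz'] := tot1 k b (ex_intro _ z h1); exists z'; exists W1.
Qed.

Lemma pdomU W W' : pdom (W `|` W') = pdom W `|` pdom W'.
Proof.
apply/seteqP; split=> k.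
  by case=> z [h|h]; [left|right]; exists z.
by case=> -[z h]; exists z; [left|right].
Qed.

Lemma doublingU W W' : doubling W -> doubling W' ->
  (forall k, pdom W k -> ~ pdom W' k) -> doubling (W `|` W').
Proof.
move=> [fun1 inj1 dom1 tot1] [fun2 inj2 dom2 tot2] disj; split.
- move=> x y y' [h|h] [h'|h']; [exact: fun1 h h'| | |exact: fun2 h h'].
  + by case: (disj x.2); [case: (dom1 _ _ h)|case: (dom2 _ _ h')].
  + by case: (disj x.2); [case: (dom1 _ _ h')|case: (dom2 _ _ h)].
- move=> x x' y [h|h] [h'|h']; [exact: inj1 h h'| | |exact: inj2 h h'].
  + by case: (disj y); [case: (dom1 _ _ h)|case: (dom2 _ _ h')].
  + by case: (disj y); [case: (dom1 _ _ h')|case: (dom2 _ _ h)].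
- by move=> x y; rewrite pdomU => -[h|h]; [case: (dom1 _ _ h)|case: (dom2 _ _ h)];
    split; [left|left|right|right].
- move=> k b; rewrite pdomU => -[h|h].
    by have [z hz] := tot1 k b h; exists z; left.
  by have [z hz] := tot2 k b h; exists z; right.
Qed.

Definition nat_doubling (e : nat -> T) : set ((bool * T) * T) :=
  [set p | exists n (b : bool), p = ((b, e n), e (2 * n + b)%N)].

Lemma pdom_nat_doubling e : pdom (nat_doubling e) = range e.
Proof.
apply/seteqP; split=> k.
  by case=> z [n [b /pair_equal_spec[/pair_equal_spec[_ ->] _]]]; exists n.
by case=> n _ <-; exists (e (2 * n + true)%N); exists n, true.
Qed.

Lemma doubling_nat e : injective e -> doubling (nat_doubling e).
Proof.
move=> einj; split.
- move=> x y y' [n [b /pair_equal_spec[-> ->]]].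
  by case=> n' [b' /pair_equal_spec[/pair_equal_spec[-> /einj ->] ->]].
- move=> x x' y [n [b /pair_equal_spec[-> ->]]] [n' [b' /pair_equal_spec[-> /einj eq_idx]]].
  by have [-> ->] : n = n' /\ b = b' by move: eq_idx; case: b; case: b' => /=; lia.
- rewrite pdom_nat_doubling => x y [n [b /pair_equal_spec[-> ->]]].
  by split; eexists.
- by rewrite pdom_nat_doubling => k b [n _ <-]; exists (e (2 * n + b)%N); exists n, b.
Qed.

Lemma maximal_doubling_cofinite W : doubling W ->
  (forall W', W `<` W' -> ~ doubling W') -> finite_set (~` pdom W).
Proof.
(* otherwise [W] extends by a doubling of a countable part of its complement *)
move=> dW Wmax; apply: contrapT => /[dup] /infinite_setN0[t0 _].
move=> /infiniteP/(card_le_inj t0)[e [eS einj]].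
have {}einj : injective e by move=> n m; exact: einj.
have disj : forall k, pdom W k -> ~ pdom (nat_doubling e) k.
  by move=> k Wk; rewrite pdom_nat_doubling => -[n _ ekn]; apply: (eS n I); rewrite ekn.
apply: (Wmax (W `|` nat_doubling e)); last exact: doublingU dW (doubling_nat _ einj) disj.
split; first exact: subsetUl.
move=> /(_ ((true, e 0%N), e 1%N)) sub_W.
have /sub_W W_e01 : (W `|` nat_doubling e) ((true, e 0%N), e 1%N) by right; exists 0%N, true.
by apply: (eS 0%N I); exists (e 1%N).
Qed.

Lemma cofinite_inj S : infinite_set S -> finite_set (~` S) ->
  exists r : T -> T, (forall k, S (r k)) /\ injective r.
Proof.
move=> /[dup] /infinite_setN0[t0 _] /infiniteP/(card_le_inj t0)[e [eS einj]] finS.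
have {}einj : injective e by move=> n m; exact: einj.
have [d dinj] := pcard_injP (finite_set_countable finS).
pose ei := pinv [set: nat] e.
have eiK k : range e k -> e (ei k) = k by move=> ek; apply: pinvK; rewrite inE.
(* odd values of [e] absorb [range e], even ones absorb the finite set [~` S] *)
pose r k := if `[< range e k >] then e (2 * ei k).+1
            else if `[< S k >] then k else e (2 * d k)%N.
exists r; split=> [k|k k'].
  rewrite /r; case: asboolP => _; first exact: eS.
  by case: asboolP => // _; exact: eS.
rewrite /r; case: (asboolP (range e k)) => ek; case: (asboolP (range e k')) => ek'.
- move=> /einj ekk; have eik : ei k = ei k' by lia.
  by rewrite -(eiK k ek) -(eiK k' ek') eik.
- case: asboolP => Sk'; first by move=> ekk; exfalso; apply: ek'; exists (2 * ei k).+1.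
  by move=> /einj; lia.
- case: asboolP => Sk; first by move=> ekk; exfalso; apply: ek; exists (2 * ei k').+1.
  by move=> /einj; lia.
- case: asboolP => Sk; case: asboolP => Sk' //.
  + by move=> ekk; exfalso; apply: ek; exists (2 * d k')%N.
  + by move=> ekk; exfalso; apply: ek'; exists (2 * d k)%N.
  by move=> /einj dkk; apply: dinj; rewrite ?inE //; lia.
Qed.

Lemma bool_prod_inj : infinite_set [set: T] -> exists j : bool * T -> T, injective j.
Proof.
move=> Tinf; have [W0 [dW0 W0max]] := Zorn_bigcup doubling_bigcup.
have finS := maximal_doubling_cofinite _ dW0 W0max.
have infS : infinite_set (pdom W0).
  by move=> finS'; apply: Tinf; rewrite -(setUv (pdom W0)) finite_setU.
have [r [rS rinj]] := cofinite_inj _ infS finS.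
have [w wW0] : exists w : bool * T -> T, forall x, pdom W0 x.2 -> W0 (x, w x).
  have [t0 _] := infinite_setN0 Tinf; case: dW0 => _ _ _ tot0.
  suff /boolp.choice[w wP] : forall x : bool * T, exists y, pdom W0 x.2 -> W0 (x, y).
    by exists w.
  move=> [b k]; case: (pselect (pdom W0 k)) => [/(tot0 k b)[z Wz]|nWk].
    by exists z.
  by exists t0.
exists (fun x => w (x.1, r x.2)) => -[b k] [b' k'] /= wbk.
have W1 := wW0 (b, r k) (rS k); have W2 := wW0 (b', r k') (rS k').
rewrite -wbk in W2; case: dW0 => _ inj0 _ _.
by case: (inj0 _ _ _ W1 W2) => -> /rinj ->.
Qed.

End BoolProdInjection.

Lemma card_setU_le T U (A B : set U) : infinite_set [set: T] ->
  A #<= [set: T] -> B #<= [set: T] -> A `|` B #<= [set: T].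
Proof.
move=> Tinf leA leB; have [t0 _] := infinite_setN0 Tinf.
have [j jinj] := bool_prod_inj _ Tinf.
have [fA [_ fAinj]] := card_le_inj t0 leA.
have [fB [_ fBinj]] := card_le_inj t0 leB.
apply: (@card_le_of_inj _ _ _ _
  (fun x => if `[< A x >] then j (true, fA x) else j (false, fB x))) => // x y ABx ABy.
case: (asboolP (A x)) => Ax; case: (asboolP (A y)) => Ay /jinj/pair_equal_spec[//].
  by move=> _; exact: fAinj.
by move=> _; apply: fBinj; [case: ABx|case: ABy].
Qed.

Lemma card_setU_eq T U (A B : set U) : infinite_set [set: T] ->
  A #= [set: T] -> B #= [set: T] -> A `|` B #= [set: T].
Proof.
move=> Tinf; rewrite !card_eq_le => /andP[leA geA] /andP[leB _].
apply/andP; split; first exact: card_setU_le.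
exact: card_le_trans geA (subset_card_le (@subsetUl _ A B)).
Qed.

Local Open Scope ring_scope.

Lemma mulrr_id_eq01 (R : idomainType) (x : R) : x * x = x -> x = 0 \/ x = 1.
Proof.
move=> xx; have : x * (x - 1) == 0 by rewrite mulrBr mulr1 xx subrr.
by rewrite mulf_eq0 subr_eq0 => /orP[/eqP|/eqP]; [left|right].
Qed.

Lemma supnorm_cst0 (R : realType) (T : Type) : supnorm R T (cst 0) = 0.
Proof.
rewrite /supnorm; have [[t _]|T0] := pselect ([set: T] !=set0).
  rewrite (_ : [set _ | _ in _] = [set 0]) ?sup1 //.
  by apply/seteqP; split=> [_ [x _ <-]|_ ->] /=; [rewrite normr0|exists t; rewrite ?normr0].
rewrite (_ : [set: T] = set0) ?image_set0 ?sup0 //.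
by apply/seteqP; split=> // x _; apply: T0; exists x.
Qed.

Lemma supnorm_ub {R : realType} {T : Type} {f : T -> R} :
  linfty R T f -> forall x, `|f x| <= supnorm R T f.
Proof.
by move=> [M fM] x; apply: ub_le_sup; [exists M => _ [y _ <-]|exists x].
Qed.

Lemma clopen_level1 (R : realFieldType) (K : topologicalType) (g : K -> R) :
  continuous g -> (forall k, g k = 0 \/ g k = 1) -> clopen (g @^-1` [set 1]).
Proof.
move=> gc g01; split.
  have -> : g @^-1` [set 1] = g @^-1` [set x | 0 < x].
    apply/seteqP; split=> k /=; first by move=> ->.
    by case: (g01 k) => ->; rewrite ?ltxx.
  by apply: (iffLR (continuousP _) gc); exact: open_gt.
by apply: (iffLR (continuous_closedP _) gc); exact: closed_eq.
Qed.

Lemma compact_directed_closed_meet (K : topologicalType) (I : Type) (D : set I)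
    (U : I -> set K) : compact [set: K] -> D !=set0 ->
  (forall i j, D i -> D j -> exists2 k, D k & U k `<=` U i `&` U j) ->
  (forall i, D i -> closed (U i) /\ U i !=set0) ->
  exists p, forall i, D i -> U i p.
Proof.
move=> Kc D0 Ddir UP.
have FF : ProperFilter (filter_from D U).
  apply: filter_from_proper; last by move=> i /UP[].
  exact: filter_from_filter.
have [p [_ clp]] := Kc _ FF filterT.
exists p => i Di; rewrite ((closure_id _).1 (UP i Di).1).
by move=> B nB; apply: clp => //; exists i.
Qed.

Lemma X0kg_Xkg (R : realType) (Kap G : Type) (f : G -> R) :
  X0kg R Kap G f -> Xkg R Kap G f.
Proof. by move=> [fb [A [kA fA]]]; split=> //; exists A; split=> //; exists 0. Qed.

Section Representation.
Context {R : realType} {Kap G : Type} {K : topologicalType}.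
Variable T : (G -> R) -> (K -> R).
Local Notation X := (Xkg R Kap G).
Local Notation e A := (\1_(~` A) : G -> R).

Hypotheses (kap_inf : infinite_set [set: Kap]) (kap_le : [set: Kap] #<= [set: G])
  (kap_lt : ~ ([set: G] #<= [set: Kap])).

Lemma exists_kappa_set : exists A : set G, A #= [set: Kap].
Proof.
have [g0 _] : [set: G] !=set0.
  by apply/set0P/negP => /eqP G0; apply: kap_lt; rewrite G0.
have [i [_ iinj]] := card_le_inj g0 kap_le.
by exists (i @` setT); apply: inj_card_eq => x y _ _; exact: iinj.
Qed.

Lemma kappa_set_proper {A : set G} : A #= [set: Kap] -> exists x, ~ A x.
Proof.
move=> kA; apply: contrapT => Afull; apply: kap_lt.
rewrite (_ : [set: G] = A); first by move: kA; rewrite card_eq_le => /andP[].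
by apply/seteqP; split=> // x _; apply: contrapT => Ax; apply: Afull; exists x.
Qed.

Lemma Xkg_cst c : X (cst c).
Proof.
have [A kA] := exists_kappa_set.
by split; [exists `|c| | exists A; split=> //; exists c].
Qed.

Lemma Xkg_indicC {A : set G} : A #= [set: Kap] -> X (e A).
Proof.
move=> kA; split; first by exists 1 => x; rewrite indicE; case: (_ \in _); rewrite ?normr0 ?normr1.
by exists A; split=> //; exists 1 => x Ax; rewrite indicE mem_set.
Qed.

Hypotheses (T_into : forall f, X f -> continuous (T f))
  (T_lin : forall (a : R) f g, X f -> X g ->
             T (fun x => a * f x + g x) = (fun k => a * T f k + T g k))
  (T_isom : forall f g, X f -> X g ->
             supnorm R K (fun k => T f k - T g k) = supnorm R G (fun x => f x - g x))
  (T_mul : forall f g, X f -> X g -> T (fun x => f x * g x) = (fun k => T f k * T g k)).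

Lemma T_cst0 : T (cst 0) = cst 0.
Proof.
have := T_lin (-1) _ _ (Xkg_cst 0) (Xkg_cst 0).
rewrite (_ : (fun _ => _) = cst 0); last by apply: funext => x; rewrite mulr0 addr0.
by move=> ->; apply: funext => k; rewrite mulN1r addNr.
Qed.

Lemma T_indicC_mul {A B : set G} : A #= [set: Kap] -> B #= [set: Kap] ->
  T (e (A `|` B)) = (fun k => T (e A) k * T (e B) k).
Proof.
by move=> kA kB; rewrite setCU indicI; exact: T_mul _ _ (Xkg_indicC kA) (Xkg_indicC kB).
Qed.

Lemma T_indicC01 {A : set G} k : A #= [set: Kap] ->
  T (e A) k = 0 \/ T (e A) k = 1.
Proof.
move=> kA; apply: mulrr_id_eq01.
by have := T_indicC_mul kA kA => /(congr1 (fun h => h k)); rewrite setUid.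
Qed.

Definition Tsupp (A : set G) : set K := T (e A) @^-1` [set 1].

Lemma Tsupp_clopen {A : set G} : A #= [set: Kap] -> clopen (Tsupp A).
Proof.
by move=> kA; apply: clopen_level1 => [|k]; [exact/T_into/Xkg_indicC|exact: T_indicC01].
Qed.

Lemma TsuppU {A B : set G} : A #= [set: Kap] -> B #= [set: Kap] ->
  Tsupp (A `|` B) = Tsupp A `&` Tsupp B.
Proof.
move=> kA kB; apply/seteqP; split=> k; rewrite /Tsupp /= T_indicC_mul //.
  by case: (T_indicC01 k kA) => ->; case: (T_indicC01 k kB) => ->;
    rewrite ?mulr0 ?mul0r ?mulr1 // => /esym/eqP; rewrite oner_eq0.
by move=> [-> ->]; rewrite mulr1.
Qed.

Lemma Tsupp_neq0 {A : set G} : A #= [set: Kap] -> Tsupp A !=set0.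
Proof.
move=> kA; apply: contrapT => Tsupp0.
have TeA0 : T (e A) = cst 0.
  apply: funext => k; case: (T_indicC01 k kA) => // TeA1.
  by case: Tsupp0; exists k.
have [x Ax] := kappa_set_proper kA.
have := T_isom _ _ (Xkg_indicC kA) (Xkg_cst 0).
rewrite TeA0 T_cst0 (_ : (fun _ => _) = cst 0); last by apply: funext => k; rewrite subrr.
rewrite supnorm_cst0 => /esym supnorm_eA0.
have eA_bdd : linfty R G (fun y => e A y - cst 0 y).
  by exists 1 => y; rewrite indicE subr0; case: (_ \in _); rewrite ?normr0 ?normr1.
have := supnorm_ub eA_bdd x.
by rewrite supnorm_eA0 indicE (mem_set (Ax : (~` A) x)) subr0 normr1 ler10.
Qed.

Lemma T_cst_on_Tsupp {f : G -> R} {A : set G} {c : R} : X f -> A #= [set: Kap] ->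
  (forall x, ~ A x -> f x = c) -> forall k, Tsupp A k -> T f k = c.
Proof.
move=> Xf kA fAc k TeA1.
have f_eA : (fun x => f x * e A x) = (fun x => c * e A x + cst 0 x).
  apply: funext => x; rewrite indicE in_setC addr0.
  have [/mem_set -> | nAx] := pselect (A x); first by rewrite !mulr0.
  by rewrite (memNset nAx) fAc.
have := congr1 (T ^~ k) f_eA.
rewrite (T_mul _ _ Xf (Xkg_indicC kA)) (T_lin _ _ _ (Xkg_indicC kA) (Xkg_cst 0)).
by rewrite T_cst0 TeA1 /= !mulr1 addr0.
Qed.

Hypothesis K_compact : compact [set: K].

Lemma Tsupp_common_point : exists p, forall A, A #= [set: Kap] -> Tsupp A p.
Proof.
apply: compact_directed_closed_meet K_compact exists_kappa_set _ _.
  move=> A B kA kB; exists (A `|` B); first exact: card_setU_eq.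
  by rewrite TsuppU.
by move=> A kA; split; [exact: (Tsupp_clopen kA).2|exact: Tsupp_neq0].
Qed.

Hypothesis T_onto : forall g : K -> R, continuous g -> exists2 f, X f & T f = g.
Variable p : K.
Hypothesis p_Tsupp : forall A, A #= [set: Kap] -> Tsupp A p.

Lemma T_image_X0kg : T @` X0kg R Kap G = CKp R K p.
Proof.
apply/seteqP; split=> [_ [f /[dup] /X0kg_Xkg Xf [_ [A [kA fA0]]] <-]|g [gc gp0]].
  by split; [exact: T_into|exact: T_cst_on_Tsupp Xf kA fA0 _ (p_Tsupp _ kA)].
have [f /[dup] Xf [fb [A [kA [c fAc]]]] Tfg] := T_onto _ gc; subst g.
have c0 : c = 0 by rewrite -gp0 (T_cst_on_Tsupp Xf kA fAc p (p_Tsupp _ kA)).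
by exists f => //; split=> //; exists A; split=> //; rewrite -c0.
Qed.

Lemma P_point_Tsupp : P_point R K p.
Proof.
move=> g gc; have [f /[dup] Xf [_ [A [kA [c fAc]]]] <-] := T_onto _ gc.
exists (Tsupp A); split; first exact: (Tsupp_clopen kA).1.
split=> [|k Ak]; first exact: p_Tsupp.
by rewrite (T_cst_on_Tsupp Xf kA fAc k Ak) (T_cst_on_Tsupp Xf kA fAc p (p_Tsupp _ kA)).
Qed.
End Representation.

Theorem mainTheorem10 (R : realType) (Kap G : Type) (K : topologicalType)
  (T : (G -> R) -> (K -> R))
  (kap_inf : infinite_set [set: Kap])
  (G_inf : infinite_set [set: G])
  (kap_le : [set: Kap] #<= [set: G])
  (kap_lt : ~ ([set: G] #<= [set: Kap]))
  (K_compact : compact [set: K])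
  (K_hausdorff : hausdorff_space K)
  (T_into : forall f, Xkg R Kap G f -> continuous (T f))
  (T_onto : forall g : K -> R, continuous g -> exists2 f, Xkg R Kap G f & T f = g)
  (T_lin : forall (a : R) f g, Xkg R Kap G f -> Xkg R Kap G g ->
             T (fun x => a * f x + g x) = (fun k => a * T f k + T g k))
  (T_isom : forall f g, Xkg R Kap G f -> Xkg R Kap G g ->
             supnorm R K (fun k => T f k - T g k) = supnorm R G (fun x => f x - g x))
  (T_mul : forall f g, Xkg R Kap G f -> Xkg R Kap G g ->
             T (fun x => f x * g x) = (fun k => T f k * T g k))
  (T_ord : forall f g, Xkg R Kap G f -> Xkg R Kap G g ->
             (forall x, f x <= g x) -> forall k, T f k <= T g k) :
  exists p : K,
    [/\ T @` X0kg R Kap G = CKp R K p,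
        (exists phi : (G -> R) -> (K -> R),
           [/\ phi @` X0kg R Kap G = CKp R K p,
               (forall (a : R) f g, X0kg R Kap G f -> X0kg R Kap G g ->
                  phi (fun x => a * f x + g x) = (fun k => a * phi f k + phi g k))
             & (forall f g, X0kg R Kap G f -> X0kg R Kap G g ->
                  supnorm R K (fun k => phi f k - phi g k) = supnorm R G (fun x => f x - g x))])
      & P_point R K p].
Proof.
have [p p_Tsupp] :=
  Tsupp_common_point T kap_inf kap_le kap_lt T_into T_lin T_isom T_mul K_compact.
have T_X0 := T_image_X0kg T kap_le kap_lt T_into T_lin T_mul T_onto p p_Tsupp.
exists p; split=> //; last exact: P_point_Tsupp T kap_le kap_lt T_into T_lin T_mul T_onto p p_Tsupp.
exists T; split=> // [a f g|f g] /X0kg_Xkg Xf /X0kg_Xkg Xg; [exact: T_lin|exact: T_isom].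
Qed.
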